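(* Suppose $\kappa<\lambda$ are infinite regular cardinals and $\square^{\mathrm{ind}}(\lambda,\kappa)$ holds. Then there is a function $d:[\lambda]^2\to\kappa$ such that: (1) for all $\alpha<\beta<\gamma<\lambda$, $d(\alpha,\gamma)\le\max(d(\alpha,\beta),d(\beta,\gamma))$; (2) for all $\alpha<\beta<\gamma<\lambda$, $d(\alpha,\beta)\le\max(d(\alpha,\gamma),d(\beta,\gamma))$; (3) for every unbounded $I\subseteq\lambda$, $d``[I]^2$ is unbounded in $\kappa$.
   Context: $d(\alpha,\beta)$ denotes $d(\{\alpha,\beta\})$. For a set $C$ of ordinals, $C'$ is its set of limit points $\{\alpha\in C\mid\sup(C\cap\alpha)=\alpha\}$ (for a club $C$ in $\beta$, $\alpha<\beta$ is in $C'$ iff $\sup(C\cap\alpha)=\alpha$). For infinite regular $\kappa<\lambda$, a $\square^{\mathrm{ind}}(\lambda,\kappa)$-sequence is a matrix $\langle C_{\alpha,i}\mid\alpha<\lambda,\ i(\alpha)\le i<\kappa\rangle$ such that: (1) for all limit $\alpha<\lambda$, $i(\alpha)<\kappa$; (2) for all limit $\alpha$ and $i(\alpha)\le i<\kappa$, $C_{\alpha,i}$ is club in $\alpha$; (3) for all limit $\alpha$ and $i(\alpha)\le i<j<\kappa$, $C_{\alpha,i}\subseteq C_{\alpha,j}$; (4) for all limit $\alpha<\beta<\lambda$ and $i(\beta)\le i<\kappa$, if $\alpha\in C'_{\beta,i}$ then $i(\alpha)\le i$ and $C_{\beta,i}\cap\alpha=C_{\alpha,i}$; (5) for all limit $\alpha<\beta<\lambda$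 there is $i<\kappa$ with $\alpha\in C'_{\beta,i}$; (6) there is no club $D\subseteq\lambda$ such that for every $\alpha\in D'$ there is $i<\kappa$ with $D\cap\alpha=C_{\alpha,i}$. $\square^{\mathrm{ind}}(\lambda,\kappa)$ asserts the existence of such a sequence. *)

(* Ordinals / cardinals are modelled as types carrying a strict
   well-order; an ordinal is determined up to isomorphism by its order type. *)
Set Implicit Arguments.

Section Ord.
Variable T : Type.
Variable lt : T -> T -> Prop.

Definition strict_wellorder : Prop :=
  (forall x, ~ lt x x) /\
  (forall x y z, lt x y -> lt y z -> lt x z) /\
  (forall x y, lt x y \/ x = y \/ lt y x) /\
  well_founded lt.

Definition le (x y : T) : Prop := lt x y \/ x = y.

Definition is_limit (a : T) : Prop :=
  (exists z, lt z a) /\ (forall b, lt b a -> exists c, lt b c /\ lt c a).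

Definition limit_point (C : T -> Prop) (a : T) : Prop :=
  (exists z, lt z a) /\
  (forall d, lt d a -> exists c, C c /\ lt d c /\ lt c a).

Definition club_in (C : T -> Prop) (a : T) : Prop :=
  (forall x, C x -> lt x a) /\
  (forall x, lt x a -> exists y, C y /\ le x y) /\
  (forall g, lt g a -> limit_point C g -> C g).

Definition club (C : T -> Prop) : Prop :=
  (forall x, exists y, C y /\ le x y) /\
  (forall g, limit_point C g -> C g).

Definition unbounded (I : T -> Prop) : Prop :=
  forall x, exists y, I y /\ le x y.
End Ord.

Definition inj_into (A B : Type) : Prop :=
  exists f : A -> B, forall x y, f x = f y -> x = y.

Definition infinite_regular_cardinal (T : Type) (lt : T -> T -> Prop) : Prop :=
  strict_wellorder lt /\
  (forall x : T, ~ inj_into T {y : T | lt y x}) /\      (* initial ordinal *)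
  inj_into nat T /\
  (forall A : T -> Prop, unbounded lt A -> inj_into T {y : T | A y}). (* regular *)

Definition card_lt (K L : Type) : Prop := inj_into K L /\ ~ inj_into L K.

(* a square^ind(lambda,kappa)-sequence: C alpha i is C_{alpha,i}, ii alpha is i(alpha) *)
Definition square_ind_seq (L K : Type) (ltL : L -> L -> Prop) (ltK : K -> K -> Prop)
  (C : L -> K -> L -> Prop) (ii : L -> K) : Prop :=
  (forall a i, is_limit ltL a -> le ltK (ii a) i -> club_in ltL (C a i) a) /\
  (* (3) *)
  (forall a i j, is_limit ltL a -> le ltK (ii a) i -> ltK i j ->
     forall x, C a i x -> C a j x) /\
  (* (4) *)
  (forall a b i, is_limit ltL a -> is_limit ltL b -> ltL a b -> le ltK (ii b) i ->
     limit_point ltL (C b i) a ->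
     le ltK (ii a) i /\ (forall x, (C b i x /\ ltL x a) <-> C a i x)) /\
  (forall a b, is_limit ltL a -> is_limit ltL b -> ltL a b ->
     exists i, le ltK (ii b) i /\ limit_point ltL (C b i) a) /\
  (* (6) *)
  ~ (exists D : L -> Prop, club ltL D /\
       forall a, limit_point ltL D a ->
         exists i, le ltK (ii a) i /\ (forall x, (D x /\ ltL x a) <-> C a i x)).

Definition square_ind (L K : Type) (ltL : L -> L -> Prop) (ltK : K -> K -> Prop) : Prop :=
  exists C ii, @square_ind_seq L K ltL ltK C ii.

From Stdlib Require Import Classical ClassicalEpsilon.

(* Let φ(x) be the least limit above x; limits are unbounded in λ, since otherwise a
   final segment would be a club without limit points, threading the sequence
   vacuously.  For limits p < q let dist p q be the least i with p ∈ C'_{q,i}.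
   Monotonicity (3) and coherence (4) of the matrix make dist satisfy both triangle
   inequalities, and d(a, b) := dist (φ a) (φ b).  If d were below k on all pairs of
   an unbounded I, the clubs C_{q,k}, q ∈ φ[I], would cohere, and their union would be
   a club threading the sequence, contradicting (6). *)

Set Implicit Arguments.
Unset Strict Implicit.

Section WellOrder.
Variables (T : Type) (lt : T -> T -> Prop).

Definition is_least (P : T -> Prop) (m : T) : Prop :=
  P m /\ forall y, P y -> le lt m y.

Lemma limit_point_is_limit (A : T -> Prop) a : limit_point lt A a -> is_limit lt a.
Proof.
  intros [Hpos Hcof]. split; [exact Hpos|].
  intros b Hb. destruct (Hcof b Hb) as [c [_ Hc]]. exists c; exact Hc.
Qed.

Lemma limit_point_weaken (A B : T -> Prop) p :
  (forall x, lt x p -> A x -> B x) -> limit_point lt A p -> limit_point lt B p.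
Proof.
  intros HAB [Hpos Hcof]. split; [exact Hpos|].
  intros d Hd. destruct (Hcof d Hd) as [c [Ac [Hdc Hcp]]].
  exists c. auto.
Qed.

Hypothesis Hwo : strict_wellorder lt.

Lemma least_exists (P : T -> Prop) : (exists x, P x) -> exists m, is_least P m.
Proof.
  destruct Hwo as [_ [_ [Htot Hwf]]]. intros [x Px]. revert Px.
  induction x as [x IH] using (well_founded_ind Hwf). intros Px.
  destruct (classic (exists y, lt y x /\ P y)) as [[y [Hy Py]]|Hnone].
  - exact (IH y Hy Py).
  - exists x. split; [exact Px|]. intros y Py.
    destruct (Htot x y) as [h|[h|h]]; [left; exact h|right; exact h|].
    exfalso. apply Hnone. eauto.
Qed.

Lemma wo_le_lt_trans x y z : le lt x y -> lt y z -> lt x z.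
Proof. destruct Hwo as [_ [Htr _]]. intros [h|h] h'; subst; eauto. Qed.

Lemma wo_lt_le_trans x y z : lt x y -> le lt y z -> lt x z.
Proof. destruct Hwo as [_ [Htr _]]. intros h' [h|h]; subst; eauto. Qed.

Lemma wo_le_total x y : le lt x y \/ le lt y x.
Proof. destruct Hwo as [_ [_ [Htot _]]]. unfold le. destruct (Htot x y) as [h|[h|h]]; auto. Qed.

Lemma wo_not_le_lt x y : ~ le lt x y -> lt y x.
Proof. destruct Hwo as [_ [_ [Htot _]]]. unfold le. destruct (Htot x y) as [h|[h|h]]; tauto. Qed.

End WellOrder.

Section SquareInd.
Variables (L K : Type) (ltL : L -> L -> Prop) (ltK : K -> K -> Prop).
Variables (C : L -> K -> L -> Prop) (ii : L -> K).
Hypotheses (SL : strict_wellorder ltL) (SK : strict_wellorder ltK).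
Hypothesis Hsq : square_ind_seq ltL ltK C ii.

Lemma limit_above x : exists a, is_limit ltL a /\ ltL x a.
Proof.
  pose proof Hsq as [_ [_ [_ [_ Hnothread]]]].
  apply NNPP. intro Hnone. apply Hnothread.
  assert (Hno_lp : forall g, ~ limit_point ltL (le ltL x) g).
  { intros g Hg. apply Hnone. exists g. split; [exact (limit_point_is_limit Hg)|].
    destruct Hg as [[z Hz] Hcof]. destruct (Hcof z Hz) as [c [Hxc [_ Hcg]]].
    exact (wo_le_lt_trans SL Hxc Hcg). }
  exists (le ltL x). split; [split|].
  - intro y. destruct (wo_le_total SL x y) as [h|h]; [exists y|exists x];
      split; solve [assumption | right; reflexivity].
  - intros g Hg. contradiction (Hno_lp g Hg).
  - intros a Ha. contradiction (Hno_lp a Ha).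
Qed.

Definition next_limit (x : L) : L :=
  epsilon (inhabits x) (is_least ltL (fun a => is_limit ltL a /\ ltL x a)).

Lemma next_limit_spec x :
  is_least ltL (fun a => is_limit ltL a /\ ltL x a) (next_limit x).
Proof. unfold next_limit. apply epsilon_spec. apply (least_exists SL), limit_above. Qed.

Lemma next_limit_is_limit x : is_limit ltL (next_limit x).
Proof. exact (proj1 (proj1 (next_limit_spec x))). Qed.

Lemma lt_next_limit x : ltL x (next_limit x).
Proof. exact (proj2 (proj1 (next_limit_spec x))). Qed.

Lemma next_limit_mono x y : ltL x y -> le ltL (next_limit x) (next_limit y).
Proof.
  pose proof SL as [_ [Htr _]]. intro Hxy. apply (proj2 (next_limit_spec x)).
  split; [apply next_limit_is_limit|exact (Htr _ _ _ Hxy (lt_next_limit y))].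
Qed.

Lemma next_limit_lt_reflect x y : ltL (next_limit x) (next_limit y) -> ltL x y.
Proof.
  pose proof SL as [Hirr [_ [Htot _]]]. intro Hlt.
  destruct (Htot x y) as [h|[h|h]]; [exact h| |]; exfalso.
  - subst. exact (Hirr _ Hlt).
  - exact (Hirr _ (wo_lt_le_trans SL Hlt (next_limit_mono h))).
Qed.

(* [in_Clim q i p] is the paper's [p ∈ C'_{q,i}] together with [i(q) <= i]. *)
Definition in_Clim (q : L) (i : K) (p : L) : Prop :=
  le ltK (ii q) i /\ limit_point ltL (C q i) p.

Lemma in_Clim_mono q p i j :
  is_limit ltL q -> in_Clim q i p -> le ltK i j -> in_Clim q j p.
Proof.
  pose proof Hsq as [_ [Hmono _]].
  intros Hq [Hiq Hp] [Hij|<-]; [|split; assumption].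
  split; [left; exact (wo_le_lt_trans SK Hiq Hij)|].
  apply (limit_point_weaken (A := C q i)); [|exact Hp].
  intros x _ Hx. exact (Hmono q i j Hq Hiq Hij x Hx).
Qed.

Lemma C_coherent q r m x :
  is_limit ltL q -> is_limit ltL r -> ltL q r -> in_Clim r m q ->
  ltL x q -> (C r m x <-> C q m x).
Proof.
  pose proof Hsq as [_ [_ [Hcoh _]]].
  intros Hq Hr Hqr [Hir Hlp] Hxq.
  destruct (Hcoh q r m Hq Hr Hqr Hir Hlp) as [_ Hagree].
  rewrite <- Hagree. tauto.
Qed.

Lemma in_Clim_coherent p q r m :
  is_limit ltL q -> is_limit ltL r -> ltL q r -> in_Clim r m q -> ltL p q ->
  (in_Clim r m p <-> in_Clim q m p).
Proof.
  pose proof Hsq as [_ [_ [Hcoh _]]]. pose proof SL as [_ [Htr _]].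
  intros Hq Hr Hqr Hrq Hpq.
  pose proof Hrq as [Hir Hlp].
  assert (Hiq : le ltK (ii q) m) by exact (proj1 (Hcoh q r m Hq Hr Hqr Hir Hlp)).
  split; intros [_ Hp]; split; try assumption;
    refine (limit_point_weaken _ Hp); intros x Hxp;
    rewrite (C_coherent Hq Hr Hqr Hrq (Htr _ _ _ Hxp Hpq)); tauto.
Qed.

Variable k0 : K.

Definition dist_admissible (p q : L) (i : K) : Prop :=
  is_limit ltL p -> is_limit ltL q -> ltL p q -> in_Clim q i p.

(* Outside the intended domain (limits [p < q]) every [i] is admissible, so there
   [dist p q] is the least element of [K]. *)
Definition dist (p q : L) : K :=
  epsilon (inhabits k0) (is_least ltK (dist_admissible p q)).

Lemma dist_spec p q : is_least ltK (dist_admissible p q) (dist p q).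
Proof.
  pose proof Hsq as [_ [_ [_ [Hexists _]]]].
  unfold dist. apply epsilon_spec. apply (least_exists SK).
  destruct (classic (is_limit ltL p /\ is_limit ltL q /\ ltL p q)) as [[Hp [Hq Hpq]]|Hout].
  - destruct (Hexists p q Hp Hq Hpq) as [i Hi]. exists i. intros _ _ _. exact Hi.
  - exists k0. intros Hp Hq Hpq. tauto.
Qed.

Lemma dist_in_Clim p q :
  is_limit ltL p -> is_limit ltL q -> ltL p q -> in_Clim q (dist p q) p.
Proof. exact (proj1 (dist_spec p q)). Qed.

Lemma dist_le p q j : in_Clim q j p -> le ltK (dist p q) j.
Proof. intro Hj. apply (proj2 (dist_spec p q)). intros _ _ _. exact Hj. Qed.

Lemma dist_diag p j : le ltK (dist p p) j.
Proof.
  pose proof SL as [Hirr _]. apply (proj2 (dist_spec p p)).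
  intros _ _ Hpp. contradiction (Hirr p Hpp).
Qed.

Lemma dist_ultra_left p q r :
  is_limit ltL p -> is_limit ltL q -> is_limit ltL r -> ltL p q -> ltL q r ->
  le ltK (dist p r) (dist p q) \/ le ltK (dist p r) (dist q r).
Proof.
  intros Hp Hq Hr Hpq Hqr.
  pose proof (dist_in_Clim Hp Hq Hpq) as Hpq'. pose proof (dist_in_Clim Hq Hr Hqr) as Hqr'.
  destruct (wo_le_total SK (dist p q) (dist q r)) as [Hm|Hm]; [right|left]; apply dist_le.
  - apply (in_Clim_coherent Hq Hr Hqr Hqr' Hpq). exact (in_Clim_mono Hq Hpq' Hm).
  - apply (in_Clim_coherent Hq Hr Hqr (in_Clim_mono Hr Hqr' Hm) Hpq). exact Hpq'.
Qed.

Lemma dist_ultra_right p q r :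
  is_limit ltL p -> is_limit ltL q -> is_limit ltL r -> ltL p q -> ltL q r ->
  le ltK (dist p q) (dist p r) \/ le ltK (dist p q) (dist q r).
Proof.
  pose proof SL as [_ [Htr _]]. intros Hp Hq Hr Hpq Hqr.
  pose proof (dist_in_Clim Hp Hr (Htr _ _ _ Hpq Hqr)) as Hpr'.
  pose proof (dist_in_Clim Hq Hr Hqr) as Hqr'.
  destruct (wo_le_total SK (dist p r) (dist q r)) as [Hm|Hm]; [right|left]; apply dist_le.
  - apply (in_Clim_coherent Hq Hr Hqr Hqr' Hpq). exact (in_Clim_mono Hr Hpr' Hm).
  - apply (in_Clim_coherent Hq Hr Hqr (in_Clim_mono Hr Hqr' Hm) Hpq). exact Hpr'.
Qed.

Lemma unbounded_lt (J : L -> Prop) x : unbounded ltL J -> exists q, J q /\ ltL x q.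
Proof.
  intro HJ. destruct (limit_above x) as [a [_ Hxa]]. destruct (HJ a) as [q [Hq Haq]].
  exists q. split; [exact Hq|exact (wo_lt_le_trans SL Hxa Haq)].
Qed.

Lemma no_threading_family (J : L -> Prop) k :
  unbounded ltL J -> (forall q, J q -> is_limit ltL q) ->
  (forall q, J q -> le ltK (ii q) k) ->
  (forall p q, J p -> J q -> ltL p q -> in_Clim q k p) -> False.
Proof.
  pose proof Hsq as [Hclub [_ [Hcoh [_ Hnothread]]]]. pose proof SL as [_ [Htr [Htot _]]].
  intros HJ HJlim HJii HJcoh.
  pose (D := fun x => exists q, J q /\ C q k x).
  assert (HD : forall q x, J q -> ltL x q -> (D x <-> C q k x)).
  { intros q x Hq Hxq. split; [intros [q' [Hq' Hx]]|intro Hx; exists q; auto].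
    destruct (Htot q q') as [h|[<-|h]]; [|exact Hx|].
    - apply (C_coherent (HJlim q Hq) (HJlim q' Hq') h (HJcoh q q' Hq Hq' h) Hxq), Hx.
    - apply (C_coherent (HJlim q' Hq') (HJlim q Hq) h (HJcoh q' q Hq' Hq h)); [|exact Hx].
      exact (proj1 (Hclub q' k (HJlim q' Hq') (HJii q' Hq')) x Hx). }
  apply Hnothread. exists D. split; [split|].
  - intro x. destruct (unbounded_lt x HJ) as [q [Hq Hxq]].
    destruct (Hclub q k (HJlim q Hq) (HJii q Hq)) as [_ [Hcof _]].
    destruct (Hcof x Hxq) as [y [Hy Hxy]]. exists y. split; [exists q; auto|exact Hxy].
  - intros g Hg. destruct (unbounded_lt g HJ) as [q [Hq Hgq]].
    destruct (Hclub q k (HJlim q Hq) (HJii q Hq)) as [_ [_ Hclosed]].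
    exists q. split; [exact Hq|]. apply (Hclosed g Hgq).
    refine (limit_point_weaken _ Hg). intros x Hxg.
    apply (HD q x Hq (Htr _ _ _ Hxg Hgq)).
  - intros a Ha. destruct (unbounded_lt a HJ) as [q [Hq Haq]].
    assert (Hqa : in_Clim q k a).
    { split; [exact (HJii q Hq)|]. refine (limit_point_weaken _ Ha). intros x Hxa.
      apply (HD q x Hq (Htr _ _ _ Hxa Haq)). }
    destruct (Hcoh a q k (limit_point_is_limit Ha) (HJlim q Hq) Haq (HJii q Hq) (proj2 Hqa))
      as [Hia Hagree].
    exists k. split; [exact Hia|]. intro x. rewrite <- Hagree.
    split; intros [Hx Hxa]; split; try exact Hxa;
      apply (HD q x Hq (Htr _ _ _ Hxa Haq)); exact Hx.
Qed.

Lemma no_unbounded_coherent_family (J : L -> Prop) k :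
  unbounded ltL J -> (forall q, J q -> is_limit ltL q) ->
  (forall p q, J p -> J q -> ltL p q -> in_Clim q k p) -> False.
Proof.
  intros HJ HJlim HJcoh.
  (* dropping the least element of [J] forces [i(q) <= k] on the rest *)
  apply (no_threading_family (J := fun q => J q /\ exists p, J p /\ ltL p q) (k := k)).
  - intro x. destruct (unbounded_lt x HJ) as [p [Hp Hxp]].
    destruct (unbounded_lt p HJ) as [q [Hq Hpq]].
    exists q. split; [split; [exact Hq|exists p; auto]|].
    left. exact (proj1 (proj2 SL) _ _ _ Hxp Hpq).
  - intros q [Hq _]. exact (HJlim q Hq).
  - intros q [Hq [p [Hp Hpq]]]. exact (proj1 (HJcoh p q Hp Hq Hpq)).
  - intros p q [Hp _] [Hq _]. exact (HJcoh p q Hp Hq).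
Qed.

Definition sq_dist (a b : L) : K := dist (next_limit a) (next_limit b).

Lemma sq_dist_ultra_left a b c : ltL a b -> ltL b c ->
  le ltK (sq_dist a c) (sq_dist a b) \/ le ltK (sq_dist a c) (sq_dist b c).
Proof.
  unfold sq_dist. intros Hab Hbc.
  destruct (next_limit_mono Hab) as [Hab'|<-]; [|right; right; reflexivity].
  destruct (next_limit_mono Hbc) as [Hbc'|<-]; [|left; right; reflexivity].
  apply dist_ultra_left; auto using next_limit_is_limit.
Qed.

Lemma sq_dist_ultra_right a b c : ltL a b -> ltL b c ->
  le ltK (sq_dist a b) (sq_dist a c) \/ le ltK (sq_dist a b) (sq_dist b c).
Proof.
  unfold sq_dist. intros Hab Hbc.
  destruct (next_limit_mono Hab) as [Hab'|<-]; [|left; apply dist_diag].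
  destruct (next_limit_mono Hbc) as [Hbc'|<-]; [|left; right; reflexivity].
  apply dist_ultra_right; auto using next_limit_is_limit.
Qed.

Lemma sq_dist_unbounded (I : L -> Prop) k : unbounded ltL I ->
  exists a b, I a /\ I b /\ ltL a b /\ le ltK k (sq_dist a b).
Proof.
  intro HI. apply NNPP. intro Hsmall.
  apply (no_unbounded_coherent_family (J := fun q => exists a, I a /\ next_limit a = q) (k := k)).
  - intro x. destruct (HI x) as [a [Ha Hxa]]. exists (next_limit a).
    split; [exists a; auto|left; exact (wo_le_lt_trans SL Hxa (lt_next_limit a))].
  - intros q [a [_ <-]]. apply next_limit_is_limit.
  - intros p q [a [Ha <-]] [b [Hb <-]] Hpq.
    apply (in_Clim_mono (next_limit_is_limit b)
             (dist_in_Clim (next_limit_is_limit a) (next_limit_is_limit b) Hpq)).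
    left. apply (wo_not_le_lt SK). intro Hk. apply Hsmall.
    exists a, b. auto using next_limit_lt_reflect.
Qed.

End SquareInd.

Theorem mainTheorem9 (K L : Type) (ltK : K -> K -> Prop) (ltL : L -> L -> Prop)
  (HK : infinite_regular_cardinal ltK) (HL : infinite_regular_cardinal ltL)
  (HKL : card_lt K L) (Hsq : square_ind ltL ltK) :
  exists d : L -> L -> K,
    (forall a b c, ltL a b -> ltL b c ->
       le ltK (d a c) (d a b) \/ le ltK (d a c) (d b c)) /\
    (forall a b c, ltL a b -> ltL b c ->
       le ltK (d a b) (d a c) \/ le ltK (d a b) (d b c)) /\
    (forall I : L -> Prop, unbounded ltL I ->
       forall k : K, exists a b, I a /\ I b /\ ltL a b /\ le ltK k (d a b)).
Proof.
  destruct HK as [SK [_ [[f _] _]]]. destruct HL as [SL _].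
  destruct Hsq as [C [ii Hseq]].
  exists (sq_dist ltL ltK C ii (f 0)). split; [|split].
  - exact (sq_dist_ultra_left SL SK Hseq (f 0)).
  - exact (sq_dist_ultra_right SL SK Hseq (f 0)).
  - intros I HI k. exact (sq_dist_unbounded SL SK Hseq (f 0) k HI).
Qed.
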